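(* Let $V$ be a finite-dimensional vector space over $k$ with basis $v_1,\dots,v_n$ and dual basis $v_1^*,\dots,v_n^*$, let $M$ be a vector space, let $\mu:\mathfrak{gl}(V)\to\mathrm{End}(M)$ be linear, and let $a:V\otimes M\to V\otimes M$ be the corresponding linear map $a(v\otimes x)=\sum_{j=1}^n v_j\otimes\mu(v\otimes v_j^* )(x)$. Define endomorphisms of $V\otimes V\otimes M$ by $\tau(v\otimes w\otimes x)=w\otimes v\otimes x$, $a_2=\mathrm{id}_V\otimes a$, and $a_1=\tau a_2\tau$. Then $\mu([X,Y])=[\mu(X),\mu(Y)]$ for all $X,Y\in\mathfrak{gl}(V)$ if and only if $$a_1a_2-a_2a_1=\tau(a_1-a_2).$$
   Context: $\mathfrak{gl}(V)$ is identified with $V\otimes V^*$ via $v\otimes f\mapsto(w\mapsto f(w)v)$; the map $\mu\mapsto a$ above is the resulting bijection between linear maps $\mathfrak{gl}(V)\to\mathrm{End}(M)$ and linear maps $V\otimes M\to V\otimes M$ (independent of the basis). Brackets are commutators. *)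

From HB Require Import structures.
From mathcomp Require Import all_boot all_order all_algebra.
Set Implicit Arguments. Unset Strict Implicit. Unset Printing Implicit Defensive.
Import GRing.Theory.
Local Open Scope ring_scope.

(* V = k^n as column vectors 'cV[k]_n, with standard basis v_j and dual basis
   v_j^* (row vectors).  gl(V) = 'M[k]_n acting on 'cV_n by left multiplication.
   The identification V (x) V^* ~ gl(V), v (x) f |-> (w |-> f(w) v), is
   v (x) f |-> v *m f  (column times row). *)
Definition bvec {k : fieldType} {n : nat} (j : 'I_n) : 'cV[k]_n := delta_mx j 0.
Definition dvec {k : fieldType} {n : nat} (j : 'I_n) : 'rV[k]_n := delta_mx 0 j.
Definition gltens {k : fieldType} {n : nat} (v : 'cV[k]_n) (f : 'rV[k]_n) : 'M[k]_n :=
  v *m f.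

(* V (x) M is modelled as {ffun 'I_n -> M} (coordinates w.r.t. the basis v_i),
   and V (x) V (x) M as {ffun 'I_n -> {ffun 'I_n -> M}}. *)
Definition tens {k : fieldType} {M : lmodType k} {n : nat} (v : 'cV[k]_n) (x : M)
  : {ffun 'I_n -> M} := [ffun i => v i 0 *: x].

Definition tau {k : fieldType} {M : lmodType k} {n : nat}
  (t : {ffun 'I_n -> {ffun 'I_n -> M}}) : {ffun 'I_n -> {ffun 'I_n -> M}} :=
  [ffun i => [ffun j => t j i]].

Definition a2 {k : fieldType} {M : lmodType k} {n : nat}
  (a : {ffun 'I_n -> M} -> {ffun 'I_n -> M})
  (t : {ffun 'I_n -> {ffun 'I_n -> M}}) : {ffun 'I_n -> {ffun 'I_n -> M}} :=
  [ffun i => a (t i)].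

Definition a1 {k : fieldType} {M : lmodType k} {n : nat}
  (a : {ffun 'I_n -> M} -> {ffun 'I_n -> M})
  (t : {ffun 'I_n -> {ffun 'I_n -> M}}) : {ffun 'I_n -> {ffun 'I_n -> M}} :=
  tau (a2 a (tau t)).

From HB Require Import structures.
From mathcomp Require Import all_boot all_order all_algebra.
Import GRing.Theory.
Local Open Scope ring_scope.

(* In coordinates, a f j = \sum_l mu E_lj (f l) with E_lj the matrix
   units.  Expanding, the (i, j) entry of a1 a2 t - a2 a1 t - tau (a1 t - a2 t) is
   \sum_(l, p) D E_li E_pj (t l p), where D X Y = [mu X, mu Y] - mu [X, Y]: the tau
   term is exactly \sum_(l, p) mu [E_li, E_pj] (t l p), because
   E_li E_pj = (i == p) E_lj.  Tensors t with a single nonzero entry then show that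
   the equation holds iff D vanishes on pairs of matrix units, i.e. (D being
   bilinear) iff mu is a Lie algebra morphism. *)

Section LinearFun.
Variables (R : pzRingType) (U W : lmodType R) (f : U -> W).
Hypothesis f_lin : linear f.

HB.instance Definition _ := GRing.isLinear.Build R U W *:%R f f_lin.

Lemma linear_fun0 : f 0 = 0. Proof. exact: linear0. Qed.
Lemma linear_funN u : f (- u) = - f u. Proof. exact: linearN. Qed.
Lemma linear_funB u v : f (u - v) = f u - f v. Proof. exact: linearB. Qed.
Lemma linear_funMn u m : f (u *+ m) = f u *+ m. Proof. exact: linearMn. Qed.
Lemma linear_funZ c u : f (c *: u) = c *: f u. Proof. exact: linearZ. Qed.
Lemma linear_fun_sum (I : Type) (r : seq I) (P : pred I) (F : I -> U) :
  f (\sum_(i <- r | P i) F i) = \sum_(i <- r | P i) f (F i).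
Proof. exact: linear_sum. Qed.
End LinearFun.
Arguments linear_fun0 {R U W f}.
Arguments linear_funN {R U W f}.
Arguments linear_funB {R U W f}.
Arguments linear_funMn {R U W f}.
Arguments linear_funZ {R U W f}.
Arguments linear_fun_sum {R U W f}.

Lemma linear_eq0_delta_mx {R : pzRingType} {m n : nat} {W : lmodType R}
    {G : 'M[R]_(m, n) -> W} :
  linear G -> (forall i j, G (delta_mx i j) = 0) -> forall X, G X = 0.
Proof.
move=> G_lin G0 X; rewrite (matrix_sum_delta X) (linear_fun_sum G_lin) big1 // => i _.
rewrite (linear_fun_sum G_lin) big1 // => j _.
by rewrite (linear_funZ G_lin) G0 scaler0.
Qed.

Lemma sum_ffun_eq0 {I : finType} {V W : zmodType} (G : I -> V -> W) :
  (forall i, G i 0 = 0) -> (forall t : {ffun I -> V}, \sum_i G i (t i) = 0) ->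
  forall i x, G i x = 0.
Proof.
move=> G0 sumG0 i x; rewrite -(sumG0 [ffun j => if j == i then x else 0]).
rewrite (bigD1 i) //= big1 ?ffunE ?eqxx ?addr0 // => j /negbTE ji.
by rewrite ffunE ji G0.
Qed.

Lemma ffunBE (I : finType) (V : zmodType) (F G : {ffun I -> V}) x :
  (F - G) x = F x - G x.
Proof. by rewrite !ffunE. Qed.

Section Coordinates.
Variables (k : fieldType) (n : nat) (M : lmodType k).

Lemma tauE (u : {ffun 'I_n -> {ffun 'I_n -> M}}) i j : tau u i j = u j i.
Proof. by rewrite !ffunE. Qed.

Lemma sum_tens_bvecE (F : 'I_n -> M) i : (\sum_l tens (bvec l) (F l)) i = F i.
Proof.
rewrite sum_ffunE (bigD1 i) //= big1 => [|l /negbTE li].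
  by rewrite ffunE /bvec mxE !eqxx scale1r addr0.
by rewrite ffunE /bvec mxE eq_sym li scale0r.
Qed.

Lemma ffun_tens_decomp (f : {ffun 'I_n -> M}) : f = \sum_l tens (bvec l) (f l).
Proof. by apply/ffunP => i; rewrite sum_tens_bvecE. Qed.

Lemma gltens_bvec_dvec (l j : 'I_n) : gltens (bvec l) (dvec j) = delta_mx l j :> 'M[k]_n.
Proof. exact: mul_delta_mx. Qed.

Lemma tensor_map_coordE (mu : 'M[k]_n -> M -> M)
    (a : {ffun 'I_n -> M} -> {ffun 'I_n -> M}) :
  linear a ->
  (forall v x, a (tens v x) = \sum_(j < n) tens (bvec j) (mu (gltens v (dvec j)) x)) ->
  forall f j, a f j = \sum_l mu (delta_mx l j) (f l).
Proof.
move=> a_lin a_def f j; rewrite {1}(ffun_tens_decomp f) (linear_fun_sum a_lin) sum_ffunE.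
by apply: eq_bigr => l _; rewrite a_def sum_tens_bvecE gltens_bvec_dvec.
Qed.

End Coordinates.
Arguments tensor_map_coordE {k n M mu a}.

Section BracketDefect.
Variables (R : comPzRingType) (n : nat) (M : lmodType R) (mu : 'M[R]_n -> M -> M).
Hypothesis mu_linl : forall x, linear (fun X => mu X x).
Hypothesis mu_linr : forall X, linear (mu X).

Definition bracket_defect X Y x :=
  mu X (mu Y x) - mu Y (mu X x) - mu (X *m Y - Y *m X) x.

Lemma lie_hom_iff_bracket_defect_eq0 :
  (forall X Y x, mu (X *m Y - Y *m X) x = mu X (mu Y x) - mu Y (mu X x)) <->
  (forall X Y x, bracket_defect X Y x = 0).
Proof.
split=> hom X Y x; first by rewrite /bracket_defect hom subrr.
by apply/esym/eqP; rewrite -subr_eq0; apply/eqP; exact: hom.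
Qed.

Lemma bracket_defect0 X Y : bracket_defect X Y 0 = 0.
Proof. by rewrite /bracket_defect !(linear_fun0 (mu_linr _)) !subrr. Qed.

Lemma bracket_defectC X Y x : bracket_defect Y X x = - bracket_defect X Y x.
Proof.
rewrite /bracket_defect -[Y *m X - X *m Y]opprB (linear_funN (mu_linl x)).
by rewrite opprK [RHS]opprB opprB addrC.
Qed.

Lemma bracket_defect_linear Y x : linear (fun X => bracket_defect X Y x).
Proof.
move=> c X1 X2; rewrite /bracket_defect.
have -> : (c *: X1 + X2) *m Y - Y *m (c *: X1 + X2)
        = c *: (X1 *m Y - Y *m X1) + (X2 *m Y - Y *m X2).
  by rewrite mulmxDl mulmxDr -scalemxAl -scalemxAr scalerBr opprD addrACA.
rewrite !(mu_linl _ c) (mu_linr Y) !scalerBr.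
by rewrite opprD addrACA [in LHS]opprD [LHS]addrACA.
Qed.

Lemma sum_mu_bracket_delta (t : 'I_n -> 'I_n -> M) i j :
  \sum_l \sum_p mu (delta_mx l i *m delta_mx p j - delta_mx p j *m delta_mx l i) (t l p)
  = \sum_l mu (delta_mx l j) (t l i) - \sum_p mu (delta_mx p i) (t j p).
Proof.
have pick (G : 'I_n -> M) i0 : \sum_p G p *+ (i0 == p) = G i0.
  by rewrite (bigD1 i0) //= eqxx big1 ?addr0 // => p /negbTE; rewrite eq_sym => ->.
under eq_bigr => l _ do under eq_bigr => p _ do
  rewrite (linear_funB (mu_linl _)) !mul_delta_mx_cond !(linear_funMn (mu_linl _)).
under eq_bigr => l _ do rewrite sumrB pick.
by rewrite sumrB exchange_big /=; under [X in _ - X]eq_bigr => p _ do rewrite pick.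
Qed.

Lemma bracket_defect_eq0 :
  (forall l i p j x, bracket_defect (delta_mx l i) (delta_mx p j) x = 0) ->
  forall X Y x, bracket_defect X Y x = 0.
Proof.
move=> defect_delta0 X Y x.
apply: (linear_eq0_delta_mx (bracket_defect_linear Y x)) => l i.
rewrite bracket_defectC; apply/eqP; rewrite oppr_eq0; apply/eqP.
apply: (linear_eq0_delta_mx (bracket_defect_linear _ x)) => p j.
exact: defect_delta0.
Qed.

End BracketDefect.
Arguments bracket_defect {R n M} mu X Y x.
Arguments bracket_defect0 {R n M mu}.
Arguments lie_hom_iff_bracket_defect_eq0 {R n M}.
Arguments sum_mu_bracket_delta {R n M mu}.
Arguments bracket_defect_eq0 {R n M mu}.

Section TensorEquation.
Variables (k : fieldType) (n : nat) (M : lmodType k) (mu : 'M[k]_n -> M -> M).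
Variable a : {ffun 'I_n -> M} -> {ffun 'I_n -> M}.
Hypothesis mu_linl : forall x, linear (fun X => mu X x).
Hypothesis mu_linr : forall X, linear (mu X).
Hypothesis aE : forall f j, a f j = \sum_l mu (delta_mx l j) (f l).

Lemma a2E t i j : a2 a t i j = \sum_l mu (delta_mx l j) (t i l).
Proof. by rewrite ffunE aE. Qed.

Lemma a1E t i j : a1 a t i j = \sum_l mu (delta_mx l i) (t l j).
Proof. by rewrite /a1 /tau ffunE ffunE a2E; apply: eq_bigr => l _; rewrite !ffunE. Qed.

Lemma tensor_eqn_defectE t i j :
  (a1 a (a2 a t) - a2 a (a1 a t)) i j - tau (a1 a t - a2 a t) i j
  = \sum_l \sum_p bracket_defect mu (delta_mx l i) (delta_mx p j) (t l p).
Proof.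
rewrite /bracket_defect; under eq_bigr => l _ do rewrite !sumrB.
rewrite !sumrB (sum_mu_bracket_delta mu_linl) !ffunBE tauE !ffunBE.
rewrite a1E a2E (a1E t j i) (a2E t j i); congr (_ - _ - (_ - _)).
  by apply: eq_bigr => l _; rewrite a2E (linear_fun_sum (mu_linr _)).
under eq_bigr => p _ do rewrite a1E (linear_fun_sum (mu_linr _)).
exact: exchange_big.
Qed.

Lemma tensor_eqn_of_bracket_defect_eq0 :
  (forall X Y x, bracket_defect mu X Y x = 0) ->
  forall t, a1 a (a2 a t) - a2 a (a1 a t) = tau (a1 a t - a2 a t).
Proof.
move=> defect0 t; apply/ffunP => i; apply/ffunP => j; apply/eqP.
rewrite -subr_eq0 tensor_eqn_defectE.
by rewrite big1 // => l _; rewrite big1 // => p _; rewrite defect0.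
Qed.

Lemma bracket_defect_delta_eq0 :
  (forall t, a1 a (a2 a t) - a2 a (a1 a t) = tau (a1 a t - a2 a t)) ->
  forall l i p j x, bracket_defect mu (delta_mx l i) (delta_mx p j) x = 0.
Proof.
move=> tensor_eqn l i p j x.
pose G l' p' := bracket_defect mu (delta_mx l' i) (delta_mx p' j).
have G0 l' p' : G l' p' 0 = 0 := bracket_defect0 mu_linr _ _.
have rowG0 : forall l' (r : {ffun 'I_n -> M}), \sum_p' G l' p' (r p') = 0.
  apply: sum_ffun_eq0 => [l'|t]; first by rewrite big1 // => p' _; rewrite ffunE G0.
  by rewrite /G -tensor_eqn_defectE tensor_eqn subrr.
exact: sum_ffun_eq0 (G l) (G0 l) (rowG0 l) p x.
Qed.

End TensorEquation.
Arguments tensor_eqn_of_bracket_defect_eq0 {k n M mu a}.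
Arguments bracket_defect_delta_eq0 {k n M mu a}.

Theorem proposition4p2 (k : fieldType) (n : nat) (M : lmodType k)
  (mu : 'M[k]_n -> M -> M)
  (mu_lin : forall (c : k) (X Y : 'M[k]_n) (x : M),
      mu (c *: X + Y) x = c *: mu X x + mu Y x)
  (mu_end : forall X : 'M[k]_n, linear (mu X))
  (a : {ffun 'I_n -> M} -> {ffun 'I_n -> M})
  (a_lin : linear a)
  (a_def : forall (v : 'cV[k]_n) (x : M),
      a (tens v x) = \sum_(j < n) tens (bvec j) (mu (gltens v (dvec j)) x)) :
  (forall (X Y : 'M[k]_n) (x : M),
      mu (X *m Y - Y *m X) x = mu X (mu Y x) - mu Y (mu X x))
  <->
  (forall t : {ffun 'I_n -> {ffun 'I_n -> M}},
      a1 a (a2 a t) - a2 a (a1 a t) = tau (a1 a t - a2 a t)).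
Proof.
have mu_linl : forall x, linear (fun X => mu X x) := fun x c X Y => mu_lin c X Y x.
have aE := tensor_map_coordE a_lin a_def.
apply: (iff_trans (lie_hom_iff_bracket_defect_eq0 mu)); split => [defect0 | tensor_eqn].
  exact: tensor_eqn_of_bracket_defect_eq0 mu_linl mu_end aE defect0.
apply: (bracket_defect_eq0 mu_linl mu_end).
exact: bracket_defect_delta_eq0 mu_linl mu_end aE tensor_eqn.
Qed.
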